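(* Let $\omega=e^{2\pi i/3}$, $\Delta=\mathrm{diag}(1,0,-1)$, and \[ g(\lambda)=\frac{i}{\sqrt3}\,\lambda^{\Delta/3}\begin{pmatrix}1&\omega&\omega^2\\1&1&1\\1&\omega^2&\omega\end{pmatrix}. \] Then $\det g(\lambda)=1$, and if $\Psi$ satisfies $\partial_\lambda\Psi=L(\lambda;t_5,t_2,x)\Psi$ (with $L$ as in the context) and we set $\Psi=g\Phi$ and $\lambda=\xi^3$, then $\Phi=\Phi(\xi;t_5,t_2,x)$ satisfies $\partial_\xi\Phi=\mathcal L(\xi;t_5,t_2,x)\Phi$, where \[ \mathcal L(\xi)=3\begin{pmatrix}1&0&0\\0&\omega&0\\0&0&\omega^2\end{pmatrix}\xi^6+\sum_{k=0}^4\mathcal L_k\xi^k+\frac1\xi\cdot\frac{i}{\sqrt3}\begin{pmatrix}0&-1&1\\1&0&-1\\-1&1&0\end{pmatrix} \] for some matrices $\mathcal L_k$ independent of $\xi$.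
   Context: $E_{ij}$ are $3\times3$ matrix units and $Q_U,Q_V,Q_W,P_U,P_V,P_W,t_5,t_2,x$ are parameters. $L(\lambda)=E_{13}\lambda^2+\begin{pmatrix}0&2t_5+\frac14Q_U&-Q_V\\1&0&2t_5+\frac14Q_U\\0&1&0\end{pmatrix}\lambda+L_0$, where $L_0$ has rows $(\tfrac18Q_U^2-P_W+\tfrac12P_V-\tfrac14t_5Q_U-\tfrac16t_5^2,L_{12},L_{13})$, $(\tfrac12Q_V-\tfrac14Q_W,2P_W-\tfrac14Q_U^2+\tfrac12t_5Q_U+\tfrac13t_5^2,L_{23})$, $(t_5-\tfrac12Q_U,\tfrac12Q_V+\tfrac14Q_W,\tfrac18Q_U^2-P_W-\tfrac12P_V-\tfrac14t_5Q_U-\tfrac16t_5^2)$, with $L_{12}=\tfrac5{16}Q_UQ_W-P_U+\tfrac14t_5Q_W-\tfrac38Q_UQ_V-\tfrac12t_5Q_V+t_2$, $L_{13}=\tfrac1{16}Q_W^2+\tfrac7{32}Q_U^3+\tfrac34Q_V^2-\tfrac32P_WQ_U+\tfrac5{16}t_5Q_U^2-2t_5P_W+\tfrac14t_5^2Q_U+x+\tfrac8{27}t_5^3$, $L_{23}=-\tfrac5{16}Q_UQ_W+P_U-\tfrac14t_5Q_W-\tfrac38Q_UQ_V-\tfrac12t_5Q_V+t_2$. $\lambda^{\Delta/3}=\exp(\frac\Delta3\log\lambda)$. *)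

From mathcomp Require Import all_boot all_order all_algebra.
From mathcomp Require Import all_classical all_reals all_analysis.
From mathcomp Require Export complex.
Import GRing.Theory Num.Theory numFieldNormedType.Exports.

Set Implicit Arguments.
Unset Strict Implicit.
Unset Printing Implicit Defensive.

Local Open Scope ring_scope.
Local Open Scope complex_scope.

(* The complex numbers over a real type R, seen as a numClosedFieldType
   (hence a normed module over itself, so complex derivatives make sense). *)
Definition CC (R : realType) : numClosedFieldType := R[i].

Section Defs.
Variable R : realType.
Local Notation C := (CC R).

Definition mx3 (a b c d e f g h k : C) : 'M[C]_3 :=
  \matrix_(i < 3, j < 3)
    nth 0 (nth [::] [:: [:: a; b; c]; [:: d; e; f]; [:: g; h; k]] i) j.

Definition omega : C := (cos (2 * pi / 3 : R)) +i* (sin (2 * pi / 3 : R)).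

Definition sqrt3 : C := sqrtC (3 : C).

Definition Delta : 'M[C]_3 := \matrix_(i < 3, j < 3)
  (if i == j then ((1 - (i : nat)%:Z)%:~R : C) else 0).

(* lambda^{Delta/3} evaluated at lambda = xi^3, with xi = lambda^{1/3}
   the (principal) cube root: xi^Delta = diag(xi, 1, xi^{-1}). *)
Definition xi_pow_Delta (xi : C) : 'M[C]_3 := \matrix_(i < 3, j < 3)
  (if i == j then xi ^ (1 - (i : nat)%:Z) else 0).

Definition Cmat : 'M[C]_3 :=
  mx3 1 omega (omega ^+ 2)
      1 1 1
      1 (omega ^+ 2) omega.

Definition gauge (xi : C) : 'M[C]_3 := ('i / sqrt3) *: (xi_pow_Delta xi *m Cmat).

Definition E13 : 'M[C]_3 := mx3 0 0 1 0 0 0 0 0 0.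

Section Lax.
Variables (QU QV QW PU PV PW t5 t2 x : C).

Definition L1 : 'M[C]_3 :=
  mx3 0 (2 * t5 + QU / 4) (- QV)
      1 0 (2 * t5 + QU / 4)
      0 1 0.

Definition L12 : C :=
  5/16 * QU * QW - PU + 1/4 * t5 * QW - 3/8 * QU * QV - 1/2 * t5 * QV + t2.
Definition L13 : C :=
  1/16 * QW ^+ 2 + 7/32 * QU ^+ 3 + 3/4 * QV ^+ 2 - 3/2 * PW * QU
  + 5/16 * t5 * QU ^+ 2 - 2 * t5 * PW + 1/4 * t5 ^+ 2 * QU + x
  + 8/27 * t5 ^+ 3.
Definition L23 : C :=
  - (5/16) * QU * QW + PU - 1/4 * t5 * QW - 3/8 * QU * QV - 1/2 * t5 * QV + t2.

Definition L0 : 'M[C]_3 :=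
  mx3 (1/8 * QU ^+ 2 - PW + 1/2 * PV - 1/4 * t5 * QU - 1/6 * t5 ^+ 2) L12 L13
      (1/2 * QV - 1/4 * QW) (2 * PW - 1/4 * QU ^+ 2 + 1/2 * t5 * QU + 1/3 * t5 ^+ 2) L23
      (t5 - 1/2 * QU) (1/2 * QV + 1/4 * QW)
        (1/8 * QU ^+ 2 - PW - 1/2 * PV - 1/4 * t5 * QU - 1/6 * t5 ^+ 2).

Definition Lmat (lam : C) : 'M[C]_3 := lam ^+ 2 *: E13 + lam *: L1 + L0.

End Lax.

Definition calL6 : 'M[C]_3 := 3 *: mx3 1 0 0 0 omega 0 0 0 (omega ^+ 2).
Definition calLres : 'M[C]_3 := ('i / sqrt3) *: mx3 0 (-1) 1 1 0 (-1) (-1) 1 0.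

Definition calL (Lk : 'I_5 -> 'M[C]_3) (xi : C) : 'M[C]_3 :=
  xi ^+ 6 *: calL6 + \sum_(k < 5) xi ^+ k *: Lk k + xi^-1 *: calLres.

End Defs.

From mathcomp Require Import all_boot all_order all_algebra.
From mathcomp Require Import all_classical all_reals all_analysis.
From mathcomp Require Import complex.
From mathcomp Require Import ring lra.
Set Implicit Arguments.
Unset Strict Implicit.
Unset Printing Implicit Defensive.

Import Order.TTheory GRing.Theory Num.Theory numFieldNormedType.Exports.
Local Open Scope ring_scope.

(* Write Y(xi) = xi^-Delta = diag(xi^-1, 1, xi) and C for the constant matrix, so
   that g^-1 = (sqrt3 / i) C^-1 Y and, with Psi = g Phi and lambda = xi^3,
     Phi' = C^-1 (Y' Y^-1 + 3 xi^2 Y L(xi^3) Y^-1) C Phi,   Y' Y^-1 = - Delta / xi.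
   Conjugation by Y multiplies entry (i, j) by xi^(i-j).  Since the lambda-part of L
   has zero diagonal, zero (3,1) entry, ones on the subdiagonal and lambda^2 only in
   entry (1,3), 3 xi^2 Y L(xi^3) Y^-1 is a polynomial in xi of degree 6 with leading
   coefficient 3 times the cyclic shift and no xi^5 term.  Finally C conjugates the
   cyclic shift to diag(1, w, w^2) and - Delta to the residue matrix, which only uses
   w = (-1 + i sqrt3) / 2; and det g = (i / sqrt3)^3 det C = 1 as det C = 3 i sqrt3. *)

Section MatrixDerive.
Local Open Scope classical_set_scope.
Context {K : numFieldType} {V : normedModType K}.

Lemma is_deriveP {W : normedModType K} (f : V -> W) (x v : V) (df : W) :
  is_derive x v f df <->
  (fun h => h^-1 *: ((f \o shift x) (h *: v) - f x)) @ 0^' --> df.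
Proof.
split=> [[fv <-] // | fdf].
by apply: DeriveDef; [exact: cvgP fdf | exact: cvg_lim fdf].
Qed.

Lemma is_derive_mxP m n (f : V -> 'M[K]_(m, n)) (x v : V) (D : 'M[K]_(m, n)) :
  is_derive x v f D <-> forall i j, is_derive x v (fun z => f z i j) (D i j).
Proof.
pose dq h := h^-1 *: ((f \o shift x) (h *: v) - f x).
split=> [/is_deriveP fD i j | fD].
- apply/is_deriveP.
  have -> : (fun h => h^-1 *: (((f^~ i ^~ j) \o shift x) (h *: v) - f x i j)) =
      (fun M : 'M[K]_(m, n) => M i j) \o dq by apply: funext => h; rewrite /= !mxE.
  exact: (continuous_cvg _ (@coord_continuous K m n i j D) fD).
- apply/is_deriveP/cvg_ballP => e e0; rewrite -/dq.
  have fDe (ij : 'I_m * 'I_n) : \forall h \near 0^', ball (D ij.1 ij.2) e (dq h ij.1 ij.2).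
    have /is_deriveP/cvg_ballP/(_ e e0) := fD ij.1 ij.2.
    by apply: filterS => h; rewrite !mxE.
  have := @filter_forall _ _ _ _ (dnbhs_filter _) fDe; apply: filterS => h hD.
  by split=> // i j; exact: (hD (i, j)).
Qed.

Lemma is_derive_mulmx m p n (f : V -> 'M[K]_(m, p)) (g : V -> 'M[K]_(p, n))
    (x v : V) (df : 'M[K]_(m, p)) (dg : 'M[K]_(p, n)) :
  is_derive x v f df -> is_derive x v g dg ->
  is_derive x v (fun z => f z *m g z) (df *m g x + f x *m dg).
Proof.
move=> /is_derive_mxP fdf /is_derive_mxP gdg; apply/is_derive_mxP => i j.
have -> : (fun z => (f z *m g z) i j) =
    \sum_(k < p) ((fun z => f z i k) * (fun z => g z k j)).
  by apply: funext => z; rewrite mxE fct_sumE.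
rewrite !mxE -big_split /=; apply: is_derive_eq.
apply: eq_bigr => k _; rewrite addrC [_ *: dg _ _]mulrC; congr (_ + _); exact: mulrC.
Qed.

Lemma is_derive_inv (f : V -> K) (x v : V) (df : K) : f x != 0 ->
  is_derive x v f df -> is_derive x v (fun z => (f z)^-1) (- (f x) ^- 2 *: df).
Proof.
move=> fx0 [fv <-].
by apply: DeriveDef; [exact: derivableV | exact: deriveV].
Qed.

End MatrixDerive.

Lemma is_derive_comp {K : numFieldType} {W : normedModType K} (f : K -> K) (g : K -> W)
    (x df : K) (dg : W) :
  is_derive x 1 f df -> is_derive (f x) 1 g dg -> is_derive x 1 (g \o f) (df *: dg).
Proof.
move=> [/derivable1_diffP df' <-] [/derivable1_diffP dg' <-].
apply: DeriveDef; first exact/derivable1_diffP/differentiable_comp.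
rewrite !deriveE //; last exact: differentiable_comp.
set c := 'd f x 1.
by rewrite diff_comp //= -/c -{1}[c]mulr1 -[c * 1]/(c *: 1) linearZ.
Qed.

Lemma is_derive_exprn {K : numFieldType} n (x : K) :
  is_derive x 1 (fun w => w ^+ n) (n%:R * x ^+ n.-1).
Proof.
have exprn_d : derivable (fun w : K => w ^+ n) x 1 by exact: exprn_derivable.
by apply: (DeriveDef exprn_d); rewrite exp_derive [_ *: 1]mulr1.
Qed.

Lemma cos_pi3 (R : realType) : cos (pi / 3 : R) = 1 / 2.
Proof.
set c := cos (pi / 3).
have c_gt0 : 0 < c by apply: cos_gt0_pihalf; have := pi_gt0 R; lra.
have cos2 : cos (pi / 3 *+ 2) = c ^+ 2 - sin (pi / 3) ^+ 2 by rewrite mulr2n cosD -!expr2.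
have : cos (pi / 3 *+ 2) = - c.
  have -> : pi / 3 *+ 2 = - (pi / 3) + pi :> R by rewrite mulr2n; field.
  by rewrite cosDpi cosN.
rewrite cos2 sin2cos2 => /eqP; rewrite -subr_eq0.
have -> : c ^+ 2 - (1 - c ^+ 2) - - c = (2 * c - 1) * (c + 1) by ring.
by rewrite mulf_eq0 => /orP[/eqP|/eqP] h; have := c_gt0; lra.
Qed.

Section Omega.
Local Open Scope complex_scope.
Variable R : realType.
Local Notation C := (CC R).

Lemma cos_2pi3 : cos (2 * pi / 3 : R) = - (1 / 2).
Proof.
have -> : 2 * pi / 3 = - (pi / 3) + pi :> R by field.
by rewrite cosDpi cosN cos_pi3.
Qed.

Lemma sqrt3E : sqrt3 R = (2 * sin (2 * pi / 3 : R))%:C.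
Proof.
have sin_ge0 : 0 <= sin (2 * pi / 3 : R).
  by apply/ltW/sin_gt0_pi; have := pi_gt0 R; lra.
apply/eqP; rewrite -(@eqrXn2 _ 2) //; last 2 first.
- by rewrite sqrtC_ge0 ler0n.
- by rewrite -[0]/(0%:C) lecR mulr_ge0.
rewrite sqrtCK -rmorphXn /= exprMn sin2cos2 cos_2pi3.
by rewrite (_ : _ * _ = 3%:R) ?rmorph_nat //; field.
Qed.

Lemma omegaE : omega R = (-1 + 'i%R * sqrt3 R) / 2 :> C.
Proof.
rewrite sqrt3E /omega [LHS]complexE /= cos_2pi3.
rewrite rmorphM rmorphN /= rmorph_nat.
have -> : ((1 / 2 : R)%:C) = 1 / 2 :> R[i].
  by rewrite rmorphM /= rmorph1 fmorphV /= rmorph_nat.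
by rewrite (_ : 'i%R = 'i%C :> R[i]) //; field.
Qed.
End Omega.

Lemma det_mx33 (F : comNzRingType) (A : 'M[F]_3) : \det A =
  A 0 0 * (A 1 1 * A 2 2 - A 1 2 * A 2 1) - A 0 1 * (A 1 0 * A 2 2 - A 1 2 * A 2 0)
  + A 0 2 * (A 1 0 * A 2 1 - A 1 1 * A 2 0).
Proof.
rewrite (expand_det_row _ 0) !big_ord_recl big_ord0 /cofactor.
rewrite !(expand_det_row _ 0) !big_ord_recl !big_ord0 /cofactor !det_mx11 !mxE /=.
pose a (i j : nat) := A (inord i) (inord j).
have -> : A = \matrix_(i, j) a i j by apply/matrixP => i j; rewrite mxE /a !inord_val.
by rewrite !mxE /bump /=; ring.
Qed.

Section Matrix3.
Variable R : realType.
Local Notation C := (CC R).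

Local Ltac mx3_entrywise :=
  apply/matrixP => -[[|[|[|?]]] ?] -[[|[|[|?]]] ?] //; rewrite !mxE //=.

Lemma mx3E (A : 'M[C]_3) :
  A = mx3 (A 0 0) (A 0 1) (A 0 2) (A 1 0) (A 1 1) (A 1 2) (A 2 0) (A 2 1) (A 2 2).
Proof. by mx3_entrywise; congr (A _ _); exact: val_inj. Qed.

Lemma mx3_add a1 a2 a3 a4 a5 a6 a7 a8 a9 b1 b2 b3 b4 b5 b6 b7 b8 b9 :
  mx3 a1 a2 a3 a4 a5 a6 a7 a8 a9 + mx3 b1 b2 b3 b4 b5 b6 b7 b8 b9 =
  mx3 (a1 + b1) (a2 + b2) (a3 + b3) (a4 + b4) (a5 + b5) (a6 + b6)
      (a7 + b7) (a8 + b8) (a9 + b9) :> 'M[C]_3.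
Proof. by mx3_entrywise. Qed.

Lemma mx3_opp a1 a2 a3 a4 a5 a6 a7 a8 a9 :
  - mx3 a1 a2 a3 a4 a5 a6 a7 a8 a9 =
  mx3 (- a1) (- a2) (- a3) (- a4) (- a5) (- a6) (- a7) (- a8) (- a9) :> 'M[C]_3.
Proof. by mx3_entrywise. Qed.

Lemma mx3_scale k a1 a2 a3 a4 a5 a6 a7 a8 a9 :
  k *: mx3 a1 a2 a3 a4 a5 a6 a7 a8 a9 =
  mx3 (k * a1) (k * a2) (k * a3) (k * a4) (k * a5) (k * a6)
      (k * a7) (k * a8) (k * a9) :> 'M[C]_3.
Proof. by mx3_entrywise. Qed.

Lemma mx3_mul a1 a2 a3 a4 a5 a6 a7 a8 a9 b1 b2 b3 b4 b5 b6 b7 b8 b9 :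
  mx3 a1 a2 a3 a4 a5 a6 a7 a8 a9 *m mx3 b1 b2 b3 b4 b5 b6 b7 b8 b9 =
  mx3 (a1 * b1 + a2 * b4 + a3 * b7) (a1 * b2 + a2 * b5 + a3 * b8)
      (a1 * b3 + a2 * b6 + a3 * b9) (a4 * b1 + a5 * b4 + a6 * b7)
      (a4 * b2 + a5 * b5 + a6 * b8) (a4 * b3 + a5 * b6 + a6 * b9)
      (a7 * b1 + a8 * b4 + a9 * b7) (a7 * b2 + a8 * b5 + a9 * b8)
      (a7 * b3 + a8 * b6 + a9 * b9) :> 'M[C]_3.
Proof. by mx3_entrywise; rewrite !big_ord_recl big_ord0 !mxE /= addr0 !addrA. Qed.

Lemma mx3_one : 1%:M = mx3 1 0 0 0 1 0 0 0 1 :> 'M[C]_3.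
Proof. by mx3_entrywise. Qed.

Lemma xi_pow_DeltaE (z : C) : xi_pow_Delta z = mx3 z 0 0 0 1 0 0 0 z^-1.
Proof. by mx3_entrywise. Qed.

Lemma DeltaE : Delta R = mx3 1 0 0 0 0 0 0 0 (-1).
Proof. by mx3_entrywise. Qed.

End Matrix3.

Lemma mulmx1_invmx (F : comUnitRingType) n (A B : 'M[F]_n) :
  A *m B = 1%:M -> invmx A = B.
Proof.
move=> AB; have [A_unit _] := mulmx1_unit AB.
by rewrite -[invmx A]mulmx1 -AB mulKmx.
Qed.

Section Constants.
Variable R : realType.
Local Notation C := (CC R).
Local Notation s := (sqrt3 R).

Lemma sqrt3_sqr : s ^+ 2 = 3.
Proof. exact: sqrtCK. Qed.

Lemma sqrt3_neq0 : s != 0.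
Proof. by rewrite sqrtC_eq0 pnatr_eq0. Qed.

Definition cycle_mx : 'M[C]_3 := mx3 0 0 1 1 0 0 0 1 0.

Lemma Cmat_calL6 : Cmat R *m calL6 R = (3 *: cycle_mx) *m Cmat R.
Proof.
rewrite /Cmat /calL6 /cycle_mx !(mx3_scale, mx3_mul) omegaE.
by congr mx3; field: (@sqrCi C) sqrt3_sqr.
Qed.

Lemma Cmat_calLres : Cmat R *m calLres R = - Delta R *m Cmat R.
Proof.
rewrite /Cmat /calLres DeltaE !(mx3_opp, mx3_scale, mx3_mul) omegaE.
by congr mx3; field: (@sqrCi C) sqrt3_sqr; exact: sqrt3_neq0.
Qed.

Lemma det_Cmat : \det (Cmat R) = 3 * ('i * s).
Proof.
rewrite det_mx33 !mxE /= omegaE.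
by field: (@sqrCi C) sqrt3_sqr.
Qed.

Lemma Cmat_unit : Cmat R \in unitmx.
Proof.
by rewrite unitmxE det_Cmat unitfE !mulf_neq0 ?pnatr_eq0 ?neq0Ci ?sqrt3_neq0.
Qed.

Lemma xi_pow_Delta_mulV (z : C) : z != 0 -> xi_pow_Delta z *m xi_pow_Delta z^-1 = 1%:M.
Proof.
by move=> z0; rewrite !xi_pow_DeltaE invrK mx3_mul mx3_one; congr mx3; field.
Qed.

Lemma det_gauge (z : C) : z != 0 -> \det (gauge z) = 1.
Proof.
move=> z0; rewrite detZ det_mulmx det_Cmat xi_pow_DeltaE det_mx33 !mxE /=.
by field: (@sqrCi C) sqrt3_sqr; rewrite z0 sqrt3_neq0.
Qed.

Lemma invmx_gauge (z : C) : z != 0 ->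
  invmx (gauge z) = ('i / s)^-1 *: (invmx (Cmat R) *m xi_pow_Delta z^-1).
Proof.
move=> z0; apply: mulmx1_invmx.
rewrite /gauge -scalemxAl -scalemxAr scalerA mulfV; last first.
  by rewrite mulf_neq0 ?invr_eq0 ?neq0Ci ?sqrt3_neq0.
by rewrite scale1r -mulmxA (mulKVmx Cmat_unit) xi_pow_Delta_mulV.
Qed.

End Constants.

Lemma is_derive_xi_pow_DeltaV (R : realType) (z : CC R) : z != 0 ->
  is_derive z 1 (fun w => xi_pow_Delta w^-1) (z^-1 *: (- Delta R *m xi_pow_Delta z^-1)).
Proof.
move=> z0; apply/is_derive_mxP => i j.
have -> : (fun w : CC R => xi_pow_Delta w^-1 i j) =
    fun w => if i == j then [:: w^-1; 1; w]`_i else 0.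
  apply/funext => w; rewrite mxE.
  by move: i j => -[[|[|[|?]]] ?] -[[|[|[|?]]] ?] //=; exact: invrK.
rewrite xi_pow_DeltaE DeltaE invrK !(mx3_opp, mx3_mul, mx3_scale).
move: i j => -[[|[|[|?]]] ?] -[[|[|[|?]]] ?] //=; rewrite !mxE /=.
1: by apply: is_derive_eq (is_derive_inv z0 (is_derive_id z 1)) _;
     rewrite [_ *: 1]mulr1 /=; field.
all: by apply: is_derive_eq => /=; field.
Qed.

Section GaugedLax.
Variable R : realType.
Local Notation C := (CC R).
Variables (a b : C) (A0 : 'M[C]_3).
Local Notation A1 := (mx3 0 a b 1 0 a 0 1 0).

Definition Lax (lam : C) : 'M[C]_3 := lam ^+ 2 *: E13 R + lam *: A1 + A0.

(* Entry (i, j) of 3 z^2 z^-Delta Lax(z^3) z^Delta is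
   3 z^(2+i-j) (A0 i j + z^3 A1 i j + z^6 E13 i j); for k < 5, gauged_coef k
   collects its coefficient of z^k. *)
Definition gauged_coef (k : 'I_5) : 'M[C]_3 := \matrix_(i < 3, j < 3)
  (3 * (A0 i j * ((2 + i - j)%N == k)%:R
        + A1 i j * ((5 + i - j)%N == k)%:R)).

Definition gauged_Lax (z : C) : 'M[C]_3 :=
  z ^+ 6 *: (3 *: cycle_mx R) + \sum_(k < 5) z ^+ k *: gauged_coef k
  + z^-1 *: (- Delta R).

Lemma sum_gauged_coef (z : C) : \sum_(k < 5) z ^+ k *: gauged_coef k =
  mx3 (3 * (A0 0 0 * z ^+ 2)) (3 * (A0 0 1 * z + a * z ^+ 4)) (3 * (A0 0 2 + b * z ^+ 3))
      (3 * (A0 1 0 * z ^+ 3)) (3 * (A0 1 1 * z ^+ 2)) (3 * (A0 1 2 * z + a * z ^+ 4))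
      (3 * (A0 2 0 * z ^+ 4)) (3 * (A0 2 1 * z ^+ 3)) (3 * (A0 2 2 * z ^+ 2)).
Proof.
rewrite [LHS]mx3E; congr mx3; rewrite summxE !big_ord_recl big_ord0 !mxE /=; ring.
Qed.

Lemma gauge_transform (z : C) : z != 0 ->
  z^-1 *: (- Delta R *m xi_pow_Delta z^-1)
    + (3 * z ^+ 2) *: (xi_pow_Delta z^-1 *m Lax (z ^+ 3))
  = gauged_Lax z *m xi_pow_Delta z^-1.
Proof.
move=> z0; rewrite /Lax {1}[A0]mx3E /gauged_Lax sum_gauged_coef.
rewrite xi_pow_DeltaE invrK DeltaE /E13 /cycle_mx.
by rewrite !(mx3_scale, mx3_add, mx3_opp, mx3_mul); congr mx3; field.
Qed.

Definition calLk (k : 'I_5) : 'M[C]_3 := invmx (Cmat R) *m gauged_coef k *m Cmat R.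

Lemma calL_conj (z : C) : calL calLk z = invmx (Cmat R) *m gauged_Lax z *m Cmat R.
Proof.
have e6 : calL6 R = invmx (Cmat R) *m (3 *: cycle_mx R) *m Cmat R.
  by rewrite -mulmxA -Cmat_calL6 mulKmx ?Cmat_unit.
have er : calLres R = invmx (Cmat R) *m (- Delta R) *m Cmat R.
  by rewrite -mulmxA -Cmat_calLres mulKmx ?Cmat_unit.
rewrite /calL /gauged_Lax /calLk e6 er.
(* Abstracting the concrete matrices keeps the rewrites below from unfolding them. *)
move: (Cmat R) (3 *: cycle_mx R) (- Delta R) gauged_coef => Cm P D N.
rewrite !mulmxDr !mulmxDl mulmx_sumr mulmx_suml -!scalemxAr -!scalemxAl.
by congr (_ + _ + _); apply: eq_bigr => k _; rewrite -scalemxAr -scalemxAl.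
Qed.

End GaugedLax.

Lemma Lmat_Lax (R : realType) (QU QV QW PU PV PW t5 t2 x lam : CC R) :
  Lmat QU QV QW PU PV PW t5 t2 x lam
  = Lax (2 * t5 + QU / 4) (- QV) (L0 QU QV QW PU PV PW t5 t2 x) lam.
Proof. by rewrite /Lmat /Lax /L1. Qed.

Theorem mainTheorem7 (R : realType) (QU QV QW PU PV PW t5 t2 x : CC R) :
  (forall xi : CC R, xi != 0 -> \det (gauge xi) = 1) /\
  exists Lk : 'I_5 -> 'M[CC R]_3,
    forall (n : nat) (Psi : CC R -> 'M[CC R]_(3, n)),
      (forall lam : CC R, derivable Psi lam 1 /\
         derive1 Psi lam = Lmat QU QV QW PU PV PW t5 t2 x lam *m Psi lam) ->
      forall xi : CC R, xi != 0 ->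
        let Phi := fun zeta : CC R => invmx (gauge zeta) *m Psi (zeta ^+ 3) in
        derivable Phi xi 1 /\ derive1 Phi xi = calL Lk xi *m Phi xi.
Proof.
split; first exact: det_gauge.
exists (calLk (2 * t5 + QU / 4) (- QV) (L0 QU QV QW PU PV PW t5 t2 x)).
move=> n Psi dPsi xi xi0 Phi.
have Psi' (lam : CC R) : is_derive lam 1 Psi
    (Lax (2 * t5 + QU / 4) (- QV) (L0 QU QV QW PU PV PW t5 t2 x) lam *m Psi lam).
  have [Psi_d Psi_eq] := dPsi lam.
  by apply: (DeriveDef Psi_d); rewrite -derive1E Psi_eq Lmat_Lax.
pose c := 'i / sqrt3 R.
have PhiE : \forall w \near xi,
    c^-1 *: (invmx (Cmat R) *m (xi_pow_Delta w^-1 *m Psi (w ^+ 3))) = Phi w.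
  near=> w; have w0 : w != 0 by near: w; apply: cvgr_neq0 xi0.
  by rewrite /Phi invmx_gauge // mulmxA scalemxAl.
have Y' := is_derive_xi_pow_DeltaV xi0.
have Psi3' := is_derive_comp (is_derive_exprn 3 xi) (Psi' (xi ^+ 3)).
have Phi' := near_eq_is_derive PhiE (is_deriveZ c^-1
  (is_derive_mulmx (is_derive_cst (invmx (Cmat R)) xi 1) (is_derive_mulmx Y' Psi3'))).
split; first exact: ex_derive.
rewrite derive1E derive_val /Phi invmx_gauge // calL_conj /= mul0mx add0r.
rewrite -(scalemxAr _ (xi_pow_Delta xi^-1)) (mulmxA (xi_pow_Delta xi^-1)).
rewrite [(3 * xi ^+ 2) *: _]scalemxAl -mulmxDl gauge_transform //.
by rewrite -scalemxAl -!scalemxAr -!mulmxA (mulKVmx (Cmat_unit R)).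
Unshelve. all: by end_near.
Qed.
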